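(* Let $V_1, V_2$ be disjoint finite sets of nails. Let $h_1 \in F(V_1)$ solve a specification $f_1$ on $V_1$, and $h_2 \in F(V_2)$ solve a specification $f_2$ on $V_2$. Regard $f_1, f_2$ as functions on subsets $S \subseteq V_1 \cup V_2$ via $S \mapsto f_i(S \cap V_i)$. Then, as words in $F(V_1 \cup V_2)$, $h_1 + h_2$ solves $f_1 \wedge f_2$, and the commutator $[h_1, h_2] = h_1 + h_2 - h_1 - h_2$ solves $f_1 \vee f_2$.
   Context: Words are elements of the free group $F(V)$ on a finite set $V$ of nails, written additively ($+$ group operation, $-$ inverse, $0$ identity). For $S \subseteq V$, $h|_S$ is the image of $h$ under the homomorphism killing the generators in $S$ (''removing the nails in $S$''). A specification on $V$ is a monotone function $f: 2^V \to \{\mathsf{hang}, \mathsf{fall}\}$ with $f(V) = \mathsf{fall}$, where $\mathsf{hang} < \mathsf{fall}$ and monotone means $S \subseteq S' \Rightarrow f(S) \le f(S')$. A word $h$ on $V$ solves $f$ if for every $S \subseteq V$: $h|_S = 0 \iff f(S) = \mathsf{fall}$. The operations $\vee$ and $\wedge$ on specifications are pointwise $\max$ and $\min$ with respect to $\mathsf{hang} < \mathsf{fall}$. *)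

(* Free group F(V) on a set V of nails (V : {set T}, T a finType),
   realised as words (seq of letters (x, b), b = true meaning the inverse x^-1)
   modulo free reduction. *)
From mathcomp Require Import all_boot.
Set Implicit Arguments. Unset Strict Implicit. Unset Printing Implicit Defensive.

Section FreeGroup.
Variable T : finType.

Definition letter := (T * bool)%type.
Definition word := seq letter.

Definition flip (l : letter) : letter := (l.1, ~~ l.2).

Definition reduce (w : word) : word :=
  foldr (fun x acc => match acc with
                      | y :: t => if y == flip x then t else x :: acc
                      | [::] => [:: x] end) [::] w.

Definition wadd (u v : word) : word := u ++ v.
Definition wopp (u : word) : word := rev (map flip u).
Definition wcomm (u v : word) : word := u ++ v ++ wopp u ++ wopp v.

Definition is_zero (w : word) : bool := reduce w == [::].

(* h|_S : kill the generators in S *)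
Definition restrict (S : {set T}) (w : word) : word :=
  [seq l <- w | l.1 \notin S].

Definition word_on (V : {set T}) (w : word) : bool := all (fun l => l.1 \in V) w.

End FreeGroup.

Inductive outcome := hang | fall.
Definition outcome_eqb (a b : outcome) : bool :=
  match a, b with hang, hang | fall, fall => true | _, _ => false end.
Definition ole (a b : outcome) : bool :=
  match a, b with fall, hang => false | _, _ => true end.
Definition omax (a b : outcome) : outcome := if ole a b then b else a.
Definition omin (a b : outcome) : outcome := if ole a b then a else b.

Definition is_spec (T : finType) (V : {set T}) (f : {set T} -> outcome) : Prop :=
  (forall S S' : {set T}, S \subset S' -> S' \subset V -> ole (f S) (f S')) /\ f V = fall.

Definition solves (T : finType) (V : {set T}) (f : {set T} -> outcome) (h : word T) : Prop :=
  forall S : {set T}, S \subset V -> (is_zero (restrict S h) <-> f S = fall).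

(** Free reduction is a stack machine, so a word [u ++ v] whose two halves use
    disjoint alphabets reduces to [reduce u ++ reduce v]: nothing can cancel across
    the seam.  Hence [h1 + h2] reduces to 0 iff both summands do, and the four
    blocks of [h1 + h2 - h1 - h2] survive side by side unless [h1] or [h2] is 0, in
    which case the commutator is trivially 0.  Since removing nails is a
    homomorphism that acts on [h1] and [h2] separately, both claims follow at every
    [S]. *)
From mathcomp Require Import all_boot.
From Stdlib Require Import Setoid.
Set Implicit Arguments. Unset Strict Implicit. Unset Printing Implicit Defensive.

Section FreeReduction.
Variable T : finType.
Implicit Types (A : {set T}) (x y : letter T) (u v w : word T).

Definition push x w : word T :=
  match w with
  | y :: t => if y == flip x then t else x :: w
  | [::] => [:: x]
  end.

Definition reduced w := sorted (fun x y => y != flip x) w.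

Lemma reduce_cons x w : reduce (x :: w) = push x (reduce w).
Proof. by []. Qed.

Lemma flipK : involutive (@flip T).
Proof. by case=> a b; rewrite /flip /= negbK. Qed.

Lemma push_reduced x w : reduced w -> reduced (push x w).
Proof.
case: w => [|y t] //= red_yt; case: ifP => [_|y_flip]; first exact: path_sorted red_yt.
by rewrite /= y_flip red_yt.
Qed.

Lemma reduce_reduced w : reduced (reduce w).
Proof. by elim: w => //= x w IHw; apply: push_reduced. Qed.

Lemma reduce_id w : reduced w -> reduce w = w.
Proof.
elim: w => // x w IHw red_xw; rewrite reduce_cons IHw; last exact: path_sorted red_xw.
by case: w red_xw {IHw} => //= y t /andP[/negbTE-> _].
Qed.

Lemma reduceK w : reduce (reduce w) = reduce w.
Proof. exact/reduce_id/reduce_reduced. Qed.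

Lemma push_flipK x w : reduced w -> push x (push (flip x) w) = w.
Proof.
case: w => [|z t] /=; first by rewrite eqxx.
rewrite flipK; have [->|/negbTE z_x] := eqVneq z x; last by rewrite /= eqxx.
by case: t => [|z' t] //= /andP[/negbTE-> _].
Qed.

Lemma reduce_catr u v : reduce (u ++ v) = reduce (u ++ reduce v).
Proof. by rewrite /reduce !foldr_cat -/(reduce v) -/(reduce (reduce v)) reduceK. Qed.

Lemma reduce_catl u v : reduce (u ++ v) = reduce (reduce u ++ v).
Proof.
elim: u => //= x u IHu; rewrite -/(reduce (u ++ v)) IHu.
case: (reduce u) => [|y t] //=; case: eqP => [->|_] //.
exact: (push_flipK x (reduce_reduced (t ++ v))).
Qed.

Lemma woppK : involutive (@wopp T).
Proof. by move=> u; rewrite /wopp map_rev revK -map_comp (eq_map flipK) map_id. Qed.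

Lemma wopp_cons x u : wopp (x :: u) = wopp u ++ [:: flip x].
Proof. by rewrite /wopp /= rev_cons cats1. Qed.

Lemma reduce_woppl u : reduce (wopp u ++ u) = [::].
Proof.
elim: u => // x u IHu; rewrite wopp_cons -catA reduce_catr cat1s !reduce_cons.
by rewrite -{2}[x]flipK push_flipK ?reduce_reduced // -reduce_catr.
Qed.

Lemma reduce_woppr u : reduce (u ++ wopp u) = [::].
Proof. by rewrite -{1}(woppK u) reduce_woppl. Qed.

Lemma is_zero_catl u v : is_zero u -> reduce (u ++ v) = reduce v.
Proof. by move/eqP=> u0; rewrite reduce_catl u0. Qed.

Lemma is_zero_catr u v : is_zero v -> reduce (u ++ v) = reduce u.
Proof. by move/eqP=> v0; rewrite reduce_catr v0 cats0. Qed.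

Lemma is_zero_wopp u : is_zero (wopp u) = is_zero u.
Proof.
suff zero_opp w : is_zero w -> is_zero (wopp w).
  by apply/idP/idP=> /zero_opp; rewrite ?woppK.
by move=> w0; rewrite /is_zero -(is_zero_catr _ w0) reduce_woppl.
Qed.

Lemma is_zero_wcomml u v : is_zero u -> is_zero (wcomm u v).
Proof.
move=> u0; rewrite /is_zero /wcomm is_zero_catl // reduce_catr.
by rewrite (is_zero_catl (u := wopp u)) ?is_zero_wopp // -reduce_catr reduce_woppr.
Qed.

Lemma is_zero_wcommr u v : is_zero v -> is_zero (wcomm u v).
Proof.
move=> v0; rewrite /is_zero /wcomm !catA is_zero_catr ?is_zero_wopp // -catA.
by rewrite reduce_catr (is_zero_catl (u := v)) // -reduce_catr reduce_woppr.
Qed.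

Lemma word_on_reduce A w : word_on A w -> word_on A (reduce w).
Proof.
elim: w => //= x w IHw /andP[xA /IHw]; case: (reduce w) => [|y t] /=.
  by rewrite xA.
by case: ifP => _ /= => [/andP[] | ->]; rewrite ?xA.
Qed.

Lemma word_on_wopp A w : word_on A (wopp w) = word_on A w.
Proof. by rewrite /word_on /wopp all_rev all_map. Qed.

Lemma word_on_subset A (B : {set T}) w : A \subset B -> word_on A w -> word_on B w.
Proof. by move=> /subsetP sAB; apply: sub_all => l /sAB. Qed.

(* [y] lies off the alphabet of [u], so no letter of [u] can cancel it. *)
Lemma reduce_cat_sep A u y w :
  word_on A u -> y.1 \notin A -> reduced (y :: w) ->
  reduce (u ++ y :: w) = reduce u ++ y :: w.
Proof.
move=> + yA red_yw; elim: u => [_|x u IHu /andP[xA /IHu]]; first exact: reduce_id.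
rewrite cat_cons !reduce_cons => ->.
case: (reduce u) => [|z t] /=; last by case: ifP.
by case: eqP => // y_x; rewrite y_x xA in yA.
Qed.

Lemma reduce_cat_head A u v y w :
  word_on A u -> reduce v = y :: w -> y.1 \notin A ->
  reduce (u ++ v) = reduce u ++ y :: w.
Proof.
move=> onAu rv yA; rewrite reduce_catr rv (reduce_cat_sep onAu yA) // -rv.
exact: reduce_reduced.
Qed.

Lemma nonzero_reduce_head A w :
  word_on A w -> ~~ is_zero w -> exists y t, reduce w = y :: t /\ y.1 \in A.
Proof.
move=> /word_on_reduce; rewrite /is_zero.
by case: (reduce w) => // y t /andP[yA _] _; exists y, t.
Qed.

Lemma reduce_cat_disjoint A u v :
  word_on A u -> word_on (~: A) v -> reduce (u ++ v) = reduce u ++ reduce v.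
Proof.
move=> onAu onAv; have [v0|nv0] := boolP (is_zero v).
  by rewrite is_zero_catr // (eqP v0) cats0.
have [y [t [rv]]] := nonzero_reduce_head onAv nv0.
rewrite inE rv => yA; exact: reduce_cat_head onAu rv yA.
Qed.

Lemma is_zero_cat_disjoint A u v :
  word_on A u -> word_on (~: A) v -> is_zero (u ++ v) = is_zero u && is_zero v.
Proof.
by move=> onAu onAv; rewrite /is_zero (reduce_cat_disjoint onAu onAv); case: (reduce u).
Qed.

Lemma is_zero_wcomm_disjoint A u v :
  word_on A u -> word_on (~: A) v -> is_zero (wcomm u v) = is_zero u || is_zero v.
Proof.
move=> onAu onAv; have [u0|nu0] := boolP (is_zero u); first exact: is_zero_wcomml.
have [v0|nv0] := boolP (is_zero v); first exact: is_zero_wcommr.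
rewrite -is_zero_wopp in nu0.
have onAu' : word_on A (wopp u) by rewrite word_on_wopp.
have [y [t [ru' yA]]] := nonzero_reduce_head onAu' nu0.
have [z [s [rv zA]]] := nonzero_reduce_head onAv nv0.
have r1 : reduce (wopp u ++ wopp v) = y :: t ++ reduce (wopp v).
  by rewrite (reduce_cat_disjoint onAu') ?ru' ?word_on_wopp.
have r2 : reduce (v ++ wopp u ++ wopp v) = z :: s ++ y :: t ++ reduce (wopp v).
  by rewrite (reduce_cat_head onAv r1) ?rv // inE negbK.
rewrite inE in zA.
by rewrite /is_zero /wcomm (reduce_cat_head onAu r2 zA); case: (reduce u).
Qed.

Lemma restrict_cat S u v : restrict S (u ++ v) = restrict S u ++ restrict S v.
Proof. exact: filter_cat. Qed.

Lemma restrict_wopp S u : restrict S (wopp u) = wopp (restrict S u).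
Proof. by rewrite /restrict /wopp filter_rev filter_map. Qed.

Lemma restrict_wcomm S u v :
  restrict S (wcomm u v) = wcomm (restrict S u) (restrict S v).
Proof. by rewrite /wcomm !restrict_cat !restrict_wopp. Qed.

Lemma restrictI V S w : word_on V w -> restrict (S :&: V) w = restrict S w.
Proof.
by move=> /allP onVw; apply: eq_in_filter => l /onVw /= lV; rewrite !inE lV andbT.
Qed.

Lemma word_on_restrict V S w : word_on V w -> word_on V (restrict S w).
Proof.
move=> onVw; rewrite /word_on all_filter.
by apply: sub_all onVw => l /= ->; rewrite implybT.
Qed.

End FreeReduction.

Lemma omin_fall a b : omin a b = fall <-> a = fall /\ b = fall.
Proof. by case: a; case: b; intuition. Qed.

Lemma omax_fall a b : omax a b = fall <-> a = fall \/ b = fall.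
Proof. by case: a; case: b; intuition. Qed.

Lemma solves_restrict (T : finType) (V S : {set T}) f (h : word T) :
  word_on V h -> solves V f h -> is_zero (restrict S h) <-> f (S :&: V) = fall.
Proof. by move=> onVh solVh; rewrite -(restrictI S onVh); apply/solVh/subsetIr. Qed.

Theorem lemma1 (T : finType) (V1 V2 : {set T}) (f1 f2 : {set T} -> outcome)
    (h1 h2 : word T) :
  [disjoint V1 & V2] ->
  is_spec V1 f1 -> is_spec V2 f2 ->
  word_on V1 h1 -> word_on V2 h2 ->
  solves V1 f1 h1 -> solves V2 f2 h2 ->
  solves (V1 :|: V2) (fun S => omin (f1 (S :&: V1)) (f2 (S :&: V2))) (wadd h1 h2) /\
  solves (V1 :|: V2) (fun S => omax (f1 (S :&: V1)) (f2 (S :&: V2))) (wcomm h1 h2).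
Proof.
move=> disV _ _ onV1 onV2 solV1 solV2.
have onV2' : word_on (~: V1) h2.
  by apply: word_on_subset onV2; rewrite -disjoints_subset disjoint_sym.
have onS1 S := word_on_restrict S onV1.
have onS2 S := word_on_restrict S onV2'.
split=> S _.
  rewrite restrict_cat (is_zero_cat_disjoint (onS1 S) (onS2 S)) omin_fall.
  rewrite -(solves_restrict S onV1 solV1) -(solves_restrict S onV2 solV2).
  exact: iff_sym (rwP andP).
rewrite restrict_wcomm (is_zero_wcomm_disjoint (onS1 S) (onS2 S)) omax_fall.
rewrite -(solves_restrict S onV1 solV1) -(solves_restrict S onV2 solV2).
exact: iff_sym (rwP orP).
Qed.
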